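(* Let $A$ be a finite set and let $v:2^A\to\mathbb{R}_{\ge 0}$ be a monotone subadditive function with $v(\emptyset)=0$. Let $S\subseteq A$ and let $k$ be a positive integer such that $v(S)\ge k\cdot v(\{i\})$ for every $i\in S$. Suppose $S$ is divided uniformly at random into two groups $T_1$ and $T_2=S\setminus T_1$ (each element of $S$ is placed into $T_1$ or $T_2$ independently with probability $\frac12$ each). Then with probability at least $\frac{1}{2}$ we have both $v(T_1)\ge \frac{k-1}{4k}v(S)$ and $v(T_2)\ge \frac{k-1}{4k}v(S)$.
   Context: Subadditive means $v(S)+v(T)\ge v(S\cup T)$ for all $S,T\subseteq A$; monotone means $v(S)\le v(T)$ whenever $S\subseteq T$. *)

From HB Require Import structures.
From mathcomp Require Import all_boot all_order all_algebra.
Set Implicit Arguments. Unset Strict Implicit. Unset Printing Implicit Defensive.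
Import Order.TTheory GRing.Theory Num.Theory.
Local Open Scope ring_scope.

Definition monotone_setfun (A : finType) (R : realFieldType) (v : {set A} -> R) :=
  forall S T : {set A}, S \subset T -> v S <= v T.

Definition subadditive_setfun (A : finType) (R : realFieldType) (v : {set A} -> R) :=
  forall S T : {set A}, v (S :|: T) <= v S + v T.

(* Probability of event P when T1 is a uniformly random subset of S
   (equivalently: each element of S put into T1 independently w.p. 1/2). *)
Definition prob_random_half (A : finType) (R : realFieldType)
    (S : {set A}) (P : {set A} -> bool) : R :=
  #|[set T in powerset S | P T]|%:R / #|powerset S|%:R.

From HB Require Import structures.
From mathcomp Require Import all_boot all_order all_algebra.
From mathcomp Require Import ring lra.
Set Implicit Arguments.
Unset Strict Implicit.
Unset Printing Implicit Defensive.
Import Order.TTheory GRing.Theory Num.Theory.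
Local Open Scope ring_scope.

(* Take c = (k-1)/(4k) v(S) and split S into halves U and S \ U of value at
   least 2c each: for a smallest U with v(U) >= 2c, removing one element drops
   v(U) below 2c, so v(U) < 2c + v(S)/k and subadditivity leaves
   v(S \ U) >= v(S) - v(U) > 2c.  Flipping a random T on U (T |-> T xor U) then
   maps every bad T to a good one: if T or S \ T is small, it meets both halves
   in small parts, so by subadditivity the complementary parts of both halves
   are large, and the flip puts one of them on each side.  This injection from
   bad to good sets gives probability at least 1/2. *)

Definition symdiff {A : finType} (U T : {set A}) : {set A} :=
  (T :\: U) :|: (U :\: T).

Lemma symdiffK {A : finType} (U : {set A}) : involutive (symdiff U).
Proof.
by move=> T; apply/setP => y; rewrite !inE; case: (y \in T); case: (y \in U).
Qed.

Lemma prob_random_half_ge_half (A : finType) (R : realFieldType)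
    (S : {set A}) (P : {set A} -> bool) (f : {set A} -> {set A}) :
    injective f ->
    (forall T : {set A}, T \subset S -> ~~ P T -> f T \subset S /\ P (f T)) ->
  1 / 2 <= prob_random_half R S P.
Proof.
move=> f_inj f_bad_good.
set G := [set T : {set A} | P T].
have card_split : (#|powerset S :&: G| + #|powerset S :\: G|)%N = #|powerset S|.
  exact: cardsID.
have bad_le_good : (#|powerset S :\: G| <= #|powerset S :&: G|)%N.
  rewrite -(card_imset _ f_inj); apply: subset_leq_card.
  apply/subsetP => _ /imsetP [T + ->]; rewrite !inE => /andP [PT sTS].
  by have [-> ->] := f_bad_good T sTS PT.
have powS_gt0 : (0 < #|powerset S|)%N by rewrite card_powerset expn_gt0.
rewrite /prob_random_half.
have -> : [set T in powerset S | P T] = powerset S :&: G.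
  by apply/setP => T; rewrite !inE.
rewrite ler_pdivlMr ?ltr0n // -card_split.
move: bad_le_good; rewrite -(ler_nat R) natrD.
lra.
Qed.

Section MonotoneSubadditive.

Variables (A : finType) (R : realFieldType) (v : {set A} -> R).
Hypothesis v_ge0 : forall X : {set A}, 0 <= v X.
Hypothesis v_mono : monotone_setfun v.
Hypothesis v_subadd : subadditive_setfun v.

Lemma subadd_setID (Y T : {set A}) : v Y <= v (Y :&: T) + v (Y :\: T).
Proof. by rewrite -{1}(setID Y T); apply: v_subadd. Qed.

Lemma balanced_split (S : {set A}) (W c : R) :
    0 <= W -> (forall i, i \in S -> v [set i] <= W) -> W + 2 * c <= v S ->
  exists2 U : {set A}, U \subset S & c <= v U /\ c <= v (S :\: U).
Proof.
move=> W_ge0 hW hS.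
pose large (X : {set A}) := (X \subset S) && (c <= v X).
have large_S : large S by rewrite /large subxx /=; have := v_ge0 S; lra.
case: (@arg_minnP _ S large (fun X => #|X|) large_S) => U /andP [sUS hU] U_min.
exists U => //; split => //.
case: (set_0Vmem U) => [-> | [x xU]].
  by rewrite setD0 (le_trans hU) ?v_mono.
have hUx : v (U :\ x) < c.
  rewrite ltNge; apply/negP => hUx.
  have := U_min (U :\ x); rewrite /large (subset_trans (subsetDl U _) sUS) hUx.
  by rewrite (cardsD1 x U) xU ltnn => /(_ isT).
have hUx_add : v U <= v [set x] + v (U :\ x) by rewrite -{1}(setD1K xU).
have hS_add : v S <= v U + v (S :\: U).
  by rewrite -{1}(setID S U) (setIidPr sUS).
have := hW x (subsetP sUS x xU).
lra.
Qed.

Lemma large_setD (Y T : {set A}) (c : R) :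
  2 * c <= v Y -> v (Y :&: T) < c -> c <= v (Y :\: T).
Proof. by move=> hY hYT; have := subadd_setID Y T; lra. Qed.

Lemma large_setI (Y T : {set A}) (c : R) :
  2 * c <= v Y -> v (Y :\: T) < c -> c <= v (Y :&: T).
Proof. by move=> hY hYT; have := subadd_setID Y T; lra. Qed.

Lemma symdiff_bad_good (S U T : {set A}) (c : R) :
    U \subset S -> 2 * c <= v U -> 2 * c <= v (S :\: U) ->
    T \subset S -> ~~ ((c <= v T) && (c <= v (S :\: T))) ->
  symdiff U T \subset S /\
  (c <= v (symdiff U T)) && (c <= v (S :\: symdiff U T)).
Proof.
move=> sUS hU hU' sTS; rewrite negb_and -!ltNge.
have sFS : symdiff U T \subset S.
  by rewrite subUset !(subset_trans (subsetDl _ _)).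
have inF y : y \in symdiff U T = ((y \in T) != (y \in U)).
  by rewrite !inE; case: (y \in T); case: (y \in U).
set F := symdiff U T in sFS inF *.
have sUF : U :\: T \subset F.
  by apply/subsetP => y; rewrite inF !inE => /andP [/negbTE -> ->].
have sU'F : (S :\: U) :&: T \subset F.
  by apply/subsetP => y; rewrite inF !inE => /andP [/andP [/negbTE -> _] ->].
have sUS' : U :&: T \subset S :\: F.
  apply/subsetP => y; rewrite in_setD inF !inE => /andP [yU ->].
  by rewrite yU (subsetP sUS).
have sU'S' : (S :\: U) :\: T \subset S :\: F.
  apply/subsetP => y; rewrite !in_setD inF.
  by case/andP => /negbTE -> /andP [/negbTE -> ->].
case/orP => small; split => //.
- have hUT : v (U :&: T) < c by rewrite (le_lt_trans _ small) ?v_mono ?subsetIr.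
  have hU'T : v ((S :\: U) :&: T) < c.
    by rewrite (le_lt_trans _ small) ?v_mono ?subsetIr.
  apply/andP; split.
  + exact: le_trans (large_setD hU hUT) (v_mono sUF).
  + exact: le_trans (large_setD hU' hU'T) (v_mono sU'S').
- have hUT : v (U :\: T) < c.
    by rewrite (le_lt_trans _ small) ?v_mono ?setSD.
  have hU'T : v ((S :\: U) :\: T) < c.
    by rewrite (le_lt_trans _ small) ?v_mono ?setSD ?subsetDl.
  apply/andP; split.
  + exact: le_trans (large_setI hU' hU'T) (v_mono sU'F).
  + exact: le_trans (large_setI hU hUT) (v_mono sUS').
Qed.

End MonotoneSubadditive.

Theorem lemma2p1 (A : finType) (R : realFieldType) (v : {set A} -> R)
    (v_ge0 : forall X : {set A}, 0 <= v X)
    (v_mono : monotone_setfun v)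
    (v_subadd : subadditive_setfun v)
    (v_set0 : v set0 = 0)
    (S : {set A}) (k : nat) (k_gt0 : (0 < k)%N)
    (hk : forall i, i \in S -> k%:R * v [set i] <= v S) :
  1 / 2 <= prob_random_half R S
    (fun T1 => ((k%:R - 1) / (4 * k%:R) * v S <= v T1) &&
               ((k%:R - 1) / (4 * k%:R) * v S <= v (S :\: T1))).
Proof.
have k_pos : 0 < k%:R :> R by rewrite ltr0n.
set c := (k%:R - 1) / (4 * k%:R) * v S.
have W_ge0 : 0 <= v S / k%:R by rewrite divr_ge0 ?v_ge0 ?ltW.
have hW : forall i, i \in S -> v [set i] <= v S / k%:R.
  by move=> i iS; rewrite ler_pdivlMr // mulrC hk.
have hWc : v S / k%:R + 2 * (2 * c) <= v S.
  suff -> : v S / k%:R + 2 * (2 * c) = v S by [].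
  by rewrite /c; field; rewrite lt0r_neq0.
have [U sUS [hU hU']] := balanced_split v_ge0 v_mono v_subadd W_ge0 hW hWc.
apply: (prob_random_half_ge_half _ (@inv_inj _ _ (symdiffK U))) => T sTS bad.
exact: symdiff_bad_good.
Qed.
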